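(* Let $R$ be an associative unital division ring over a field $F$ of characteristic $0$ and let $\theta_{l,m}\in R$ be invertible for all $(l,m)\in\mathbb{Z}^2$. For $\lambda\in F$ define $$\mathcal{L}_{l,m}=\begin{pmatrix}\theta_{l,m+1}\theta_{l,m}^{-1} & \lambda\\ \lambda & \theta_{l,m+1}^{-1}\theta_{l,m}\end{pmatrix},\qquad \mathcal{M}_{l,m}=\begin{pmatrix}\theta_{l+1,m}\theta_{l,m}^{-1} & \lambda\\ \lambda & \theta_{l+1,m}^{-1}\theta_{l,m}\end{pmatrix}.$$ If the compatibility condition $\mathcal{L}_{l+1,m}\mathcal{M}_{l,m}=\mathcal{M}_{l,m+1}\mathcal{L}_{l,m}$ of the system $\Psi_{l,m+1}=\mathcal{L}_{l,m}\Psi_{l,m}$, $\Psi_{l+1,m}=\mathcal{M}_{l,m}\Psi_{l,m}$ holds for all $(l,m)\in\mathbb{Z}^2$ and all $\lambda\in F$, then for all $(l,m)$ $$\theta_{l+1,m+1}^{-1}\theta_{l+1,m}-\theta_{l+1,m+1}^{-1}\theta_{l,m+1}=\theta_{l,m+1}\theta_{l,m}^{-1}-\theta_{l+1,m}\theta_{l,m}^{-1}.$$ *)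

From HB Require Import structures.
From mathcomp Require Import all_boot all_order all_algebra.
Set Implicit Arguments. Unset Strict Implicit. Unset Printing Implicit Defensive.
Import Order.TTheory GRing.Theory Num.Theory.
Local Open Scope ring_scope.

Definition mx2 (R : pzRingType) (a b c d : R) : 'M[R]_2 :=
  \matrix_(i < 2, j < 2)
    if (i : nat) == 0%N then (if (j : nat) == 0%N then a else b)
    else (if (j : nat) == 0%N then c else d).

Definition laxL (F : fieldType) (R : unitAlgType F) (theta : int -> int -> R)
  (lam : F) (l m : int) : 'M[R]_2 :=
  mx2 (theta l (m + 1) * (theta l m)^-1) (lam%:A) (lam%:A)
      ((theta l (m + 1))^-1 * theta l m).

Definition laxM (F : fieldType) (R : unitAlgType F) (theta : int -> int -> R)
  (lam : F) (l m : int) : 'M[R]_2 :=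
  mx2 (theta (l + 1) m * (theta l m)^-1) (lam%:A) (lam%:A)
      ((theta (l + 1) m)^-1 * theta l m).

From HB Require Import structures.
From mathcomp Require Import all_boot all_order all_algebra.
Import Order.TTheory GRing.Theory Num.Theory.
Local Open Scope ring_scope.

(* Only the lower-left entry of the zero-curvature condition is needed: at
   lambda = 1 it reads [a + b = c + d] with the four quotients of the
   conclusion, which is the claim rearranged. *)

Lemma mx2_mul10 (R : pzRingType) (a b c d a' b' c' d' : R) :
  (mx2 a b c d *m mx2 a' b' c' d') 1 0 = c * a' + d * c'.
Proof. by rewrite !mxE !big_ord_recr big_ord0 /= !mxE /= add0r. Qed.

Section LaxPair.
Variables (F : fieldType) (R : unitAlgType F) (theta : int -> int -> R).
Variables (lam : F) (l m : int).

Lemma laxLM10 :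
  (laxL theta lam (l + 1) m *m laxM theta lam l m) 1 0
  = lam *: (theta (l + 1) m / theta l m
            + (theta (l + 1) (m + 1))^-1 * theta (l + 1) m).
Proof. by rewrite mx2_mul10 mulr_algl mulr_algr scalerDr. Qed.

Lemma laxML10 :
  (laxM theta lam l (m + 1) *m laxL theta lam l m) 1 0
  = lam *: (theta l (m + 1) / theta l m
            + (theta (l + 1) (m + 1))^-1 * theta l (m + 1)).
Proof. by rewrite mx2_mul10 mulr_algl mulr_algr scalerDr. Qed.

End LaxPair.

Lemma subr_eq_of_addr_eq (V : zmodType) (a b c d : V) :
  a + b = c + d -> b - d = c - a.
Proof. by move=> sum_eq; rewrite -[c](addrK d) -sum_eq addrAC [a + b]addrC addrK. Qed.

Theorem proposition5p2 (F : fieldType) (R : unitAlgType F)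
  (charF0 : [pchar F] =i pred0)
  (divR : forall x : R, x != 0 -> x \is a GRing.unit)
  (theta : int -> int -> R)
  (theta_unit : forall l m : int, theta l m \is a GRing.unit)
  (compat : forall (l m : int) (lam : F),
     laxL theta lam (l + 1) m *m laxM theta lam l m
     = laxM theta lam l (m + 1) *m laxL theta lam l m) :
  forall l m : int,
    (theta (l + 1) (m + 1))^-1 * theta (l + 1) m
      - (theta (l + 1) (m + 1))^-1 * theta l (m + 1)
    = theta l (m + 1) * (theta l m)^-1 - theta (l + 1) m * (theta l m)^-1.
Proof.
move=> l m; apply: subr_eq_of_addr_eq.
have := congr1 (fun M : 'M[R]_2 => M 1 0) (compat l m 1).
by rewrite /= laxLM10 laxML10 !scale1r.
Qed.
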